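(* Let $V$ be a finite vocabulary and $\mathcal{M}$ a transformer language model with deterministic forward pass and next-token probabilities $P_{\mathcal{M}}(t\mid t_1,\ldots,t_{i-1})$. Let $(t_1,\ldots,t_n)$ be a random token sequence drawn from $P_{\mathcal{M}}$, let $\mathrm{KV}_i = F_{\mathcal{M}}(t_1,\ldots,t_i)$ be the key–value state at position $i$, and assume the layer-1 key vectors $W_K^{(1)}E(t)$, $t\in V$, are pairwise distinct. Define the perplexity $\mathrm{PP}(\mathcal{M})$ by $\log_2\mathrm{PP}(\mathcal{M}) = \frac1n\,\mathbb{E}\bigl[-\log_2 P_{\mathcal{M}}(t_1,\ldots,t_n)\bigr]$. Then \[ \frac1n\sum_{i=1}^n H\bigl(\mathrm{KV}_i \mid \mathrm{KV}_{\leq i-1}\bigr) \;\leq\; \log_2 \mathrm{PP}(\mathcal{M}), \] where for $i=1$ the term is $H(\mathrm{KV}_1)$. In particular, if $\mathrm{PP}(\mathcal{M})\le 20$ the left side is at most $\log_2 20\approx 4.3$ bits.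
   Context: The transformer has $L$ layers, $H_{\mathrm{head}}$ heads and head dimension $d$; $F_{\mathcal{M}}:V^i\to\mathbb{R}^{2LH_{\mathrm{head}}d}$ is the deterministic map sending a prefix to the concatenation over all layers of the key and value vectors at position $i$. This vector contains the layer-1 key $W_K^{(1)}E(t_i)$, with $E$ the token embedding and $W_K^{(1)}$ the layer-1 key projection. $\mathrm{KV}_{\le i-1}=(\mathrm{KV}_1,\ldots,\mathrm{KV}_{i-1})$. Entropies are Shannon entropies in bits of these finitely-valued random variables. *)

From HB Require Import structures.
From mathcomp Require Import all_boot all_order all_algebra.
From mathcomp Require Import reals exp.
Set Implicit Arguments. Unset Strict Implicit. Unset Printing Implicit Defensive.
Import Order.TTheory GRing.Theory Num.Theory.
Local Open Scope ring_scope.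

Section Info.
Variable R : realType.

(* base-2 logarithm (ln 0 = 0 by library convention; only ever multiplied by 0) *)
Definition log2 (x : R) : R := ln x / ln 2.

Variable Omega : finType.
Variable p : Omega -> R.

Definition law (T : eqType) (X : Omega -> T) (x : T) : R :=
  \sum_(w | X w == x) p w.

Definition values (T : eqType) (X : Omega -> T) : seq T :=
  undup [seq X w | w <- enum Omega].

Definition entropy (T : eqType) (X : Omega -> T) : R :=
  - \sum_(x <- values X) law X x * log2 (law X x).

Definition cond_entropy (T U : eqType) (X : Omega -> T) (Y : Omega -> U) : R :=
  - \sum_(xy <- values (fun w => (X w, Y w)))
      law (fun w => (X w, Y w)) xy * log2 (law (fun w => (X w, Y w)) xy / law Y xy.2).

Definition expect (X : Omega -> R) : R := \sum_w p w * X w.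
End Info.

Definition seq_prob (R : realType) (V : finType) (n : nat)
  (P : seq V -> V -> R) (t : n.-tuple V) : R :=
  \prod_(i < n) P (take i t) (tnth t i).

Definition log2_perplexity (R : realType) (V : finType) (n : nat)
  (P : seq V -> V -> R) : R :=
  n%:R^-1 * expect (seq_prob P) (fun t : n.-tuple V => - log2 (seq_prob P t)).

Definition perplexity (R : realType) (V : finType) (n : nat)
  (P : seq V -> V -> R) : R := powR 2 (@log2_perplexity R V n P).

(* KV_i = F(t_1..t_i), for i = j+1 with j : 'I_n *)
Definition KV (V : finType) (K : Type) (n : nat) (F : seq V -> K)
  (t : n.-tuple V) (j : nat) : K := F (take j.+1 t).

(* KV_{<= i-1} = (KV_1, ..., KV_{i-1}) for i = j+1 *)
Definition KV_prefix (V : finType) (K : Type) (n : nat) (F : seq V -> K)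
  (t : n.-tuple V) (j : nat) : seq K := [seq KV F t k | k <- iota 0 j].

Definition avg_KV_entropy (R : realType) (V : finType) (N n : nat)
  (P : seq V -> V -> R) (F : seq V -> 'rV[R]_N) : R :=
  n%:R^-1 * \sum_(j < n)
     cond_entropy (seq_prob P) (fun t : n.-tuple V => KV F t j) (fun t : n.-tuple V => KV_prefix F t j).

From HB Require Import structures.
From mathcomp Require Import all_boot all_order all_algebra.
From mathcomp Require Import reals exp.
Import Order.TTheory GRing.Theory Num.Theory.
Set Implicit Arguments. Unset Strict Implicit. Unset Printing Implicit Defensive.
Local Open Scope ring_scope.

(** By the chain rule, H(KV_i | KV_{<=i-1}) = H(KV_{<=i}) - H(KV_{<=i-1}), so
    the sum telescopes to H(KV_{<=n}).  The layer-1 keys identify every token,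
    so KV_{<=n} and the sequence t determine each other and H(KV_{<=n}) = H(t),
    the expected surprisal E[-log2 P(t)] = n log2 PP.  The bound therefore
    holds with equality. *)

Section Entropy.
Variables (R : realType) (Omega : finType) (p : Omega -> R).

Lemma sum_values_law (T : eqType) (X : Omega -> T) (f : T -> R) :
  \sum_(x <- values X) law p X x * f x = \sum_w p w * f (X w).
Proof.
have -> : \sum_(x <- values X) law p X x * f x =
          \sum_(x <- values X) \sum_w (if X w == x then p w * f (X w) else 0).
  apply: eq_bigr => x _; rewrite /law big_distrl /= big_mkcond /=.
  by apply: eq_bigr => w _; case: eqP => // ->.
rewrite exchange_big /=; apply: eq_bigr => w _.
have Xw_in : X w \in values X by rewrite mem_undup; apply: map_f; rewrite mem_enum.
rewrite (bigD1_seq (X w) Xw_in (undup_uniq _)) /= eqxx big1 ?addr0 //.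
by move=> x; rewrite eq_sym => /negbTE ->.
Qed.

Lemma entropyE (T : eqType) (X : Omega -> T) :
  entropy p X = - \sum_w p w * log2 (law p X (X w)).
Proof. by rewrite /entropy sum_values_law. Qed.

Lemma eq_entropy (T U : eqType) (X : Omega -> T) (Y : Omega -> U) :
  (forall w1 w2, (X w1 == X w2) = (Y w1 == Y w2)) -> entropy p X = entropy p Y.
Proof.
move=> sameXY; rewrite !entropyE /law; congr (- _); apply: eq_bigr => w _.
by congr (_ * log2 _); apply: eq_bigl => w'; rewrite sameXY.
Qed.

Lemma entropy_id : entropy p id = expect p (fun w => - log2 (p w)).
Proof.
rewrite entropyE /expect -sumrN; apply: eq_bigr => w _.
by rewrite /law big_pred1_eq mulrN.
Qed.

Lemma entropy_const (T : eqType) (X : Omega -> T) (c : T) :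
  \sum_w p w = 1 -> (forall w, X w = c) -> entropy p X = 0.
Proof.
move=> p_sum1 Xc; rewrite entropyE /law.
under eq_bigr => w _ do (under eq_bigl => w' do rewrite !Xc eqxx; rewrite p_sum1).
by rewrite /log2 ln1 mul0r big1 ?oppr0 // => w _; rewrite mulr0.
Qed.

Hypothesis p_ge0 : forall w, 0 <= p w.

Lemma le_law (T : eqType) (X : Omega -> T) (w : Omega) : p w <= law p X (X w).
Proof. by rewrite /law (bigD1 w) //= lerDl sumr_ge0. Qed.

Lemma cond_entropyE (T U : eqType) (X : Omega -> T) (Y : Omega -> U) :
  cond_entropy p X Y = entropy p (fun w => (X w, Y w)) - entropy p Y.
Proof.
rewrite /cond_entropy sum_values_law !entropyE /= -opprD -sumrB.
congr (- _); apply: eq_bigr => w _.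
have [->|pw_neq0] := eqVneq (p w) 0; first by rewrite !mul0r subrr.
have pw_gt0 : 0 < p w by rewrite lt0r pw_neq0 p_ge0.
have XY_gt0 := lt_le_trans pw_gt0 (le_law (fun w => (X w, Y w)) w).
have Y_gt0 := lt_le_trans pw_gt0 (le_law Y w).
by rewrite -mulrBr /log2 -mulrBl lnM ?posrE ?invr_gt0 // lnV ?posrE.
Qed.

End Entropy.

Section KeyValueStates.
Variables (R : realType) (V : finType) (N m : nat).
Variables (F : seq V -> 'rV[R]_N) (key : V -> 'cV[R]_m) (idx : 'I_m -> 'I_N).
Hypothesis key_in_F : forall s t j, F (rcons s t) 0 (idx j) = key t j 0.
Hypothesis key_inj : injective key.

Lemma F_rcons_inj s s' t t' : F (rcons s t) = F (rcons s' t') -> t = t'.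
Proof.
move=> eqF; apply: key_inj; apply/matrixP => j k; rewrite (ord1 k).
by rewrite -(key_in_F s) eqF key_in_F.
Qed.

Lemma KV_prefix_rcons n (t : n.-tuple V) j :
  KV_prefix F t j.+1 = rcons (KV_prefix F t j) (KV F t j).
Proof. by rewrite /KV_prefix -[j.+1]addn1 iotaD cats1 map_rcons. Qed.

Lemma KV_prefix_inj n : injective (fun t : n.-tuple V => KV_prefix F t n).
Proof.
move=> t1 t2 /= eqKV; apply: eq_from_tnth => k.
have : KV F t1 k = KV F t2 k.
  have := congr1 (nth 0 ^~ k) eqKV.
  by rewrite !(nth_map 0%N) ?size_iota // nth_iota.
rewrite /KV !(take_nth (tnth t1 k)) ?size_tuple // -!tnth_nth.
exact: F_rcons_inj.
Qed.

Lemma sum_cond_entropy_KV n (p : n.-tuple V -> R) :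
  (forall t, 0 <= p t) -> \sum_t p t = 1 ->
  \sum_(j < n) cond_entropy p (fun t => KV F t j) (fun t => KV_prefix F t j) =
  entropy p id.
Proof.
move=> p_ge0 p_sum1; pose h j := entropy p (fun t => KV_prefix F t j).
have chain_rule j :
    cond_entropy p (fun t => KV F t j) (fun t => KV_prefix F t j) = h j.+1 - h j.
  rewrite cond_entropyE //; congr (_ - _); apply: eq_entropy => t1 t2.
  by rewrite KV_prefix_rcons KV_prefix_rcons eqseq_rcons xpair_eqE andbC.
have h0 : h 0%N = 0 by apply: (entropy_const (c := [::])).
have hn : h n = entropy p id.
  by apply: eq_entropy => t1 t2; rewrite (inj_eq (@KV_prefix_inj n)).
under eq_bigr => j _ do rewrite chain_rule.
by rewrite -(big_mkord xpredT (fun j => h j.+1 - h j)) telescope_sumr // h0 subr0.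
Qed.

End KeyValueStates.

Lemma sum_prod_next_token_prob (R : realType) (V : finType)
    (P : seq V -> V -> R) (P_sum1 : forall s, \sum_t P s t = 1) n s :
  \sum_(t : n.-tuple V) \prod_(i < n) P (s ++ take i t) (tnth t i) = 1.
Proof.
elim: n s => [|n IH] s.
  under eq_bigr => t _ do rewrite big_ord0.
  by rewrite sumr_const card_tuple expn0.
rewrite (reindex (fun xt : V * n.-tuple V => [tuple of xt.1 :: xt.2])) /=; last first.
  exists (fun t : n.+1.-tuple V => (thead t, [tuple of behead t])).
    by case=> x t _ /=; rewrite theadE; congr pair; apply: val_inj.
  by move=> t _; rewrite [in RHS](tuple_eta t).
rewrite -(pair_bigA _ (fun x (t : n.-tuple V) =>
   \prod_(i < n.+1) P (s ++ take i [tuple of x :: t]) (tnth [tuple of x :: t] i))) /=.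
rewrite -[RHS](P_sum1 s); apply: eq_bigr => x _.
under eq_bigr => t _ do rewrite big_ord_recl /= cats0 tnth0.
rewrite -mulr_sumr -[RHS]mulr1; congr (_ * _); rewrite -[RHS](IH (rcons s x)).
by apply: eq_bigr => t _; apply: eq_bigr => i _; rewrite tnthS cat_rcons.
Qed.

Lemma le_log2_powR (R : realType) (y x : R) : 0 < x -> powR 2 y <= x -> y <= log2 x.
Proof.
move=> x_gt0; have ln2_gt0 : 0 < ln (2 : R) by rewrite ln_gt0 ?ltr1n.
rewrite /log2 ler_pdivlMr // -ler_ln ?posrE ?powR_gt0 //.
by rewrite ln_powR.
Qed.

Theorem mainTheorem2 (R : realType) (V : finType) (L Hh d dm n : nat)
  (P : seq V -> V -> R)
  (HP0 : forall s t, 0 <= P s t)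
  (HP1 : forall s, \sum_(t : V) P s t = 1)
  (F : seq V -> 'rV[R]_(2 * L * Hh * d))
  (E : V -> 'cV[R]_dm) (WK : 'M[R]_(Hh * d, dm))
  (idx : 'I_(Hh * d) -> 'I_(2 * L * Hh * d))
  (Hkey : forall (s : seq V) (t : V) (j : 'I_(Hh * d)),
      F (rcons s t) 0 (idx j) = (WK *m E t) j 0)
  (Hdistinct : injective (fun t => WK *m E t)) :
  avg_KV_entropy n P F <= log2_perplexity n P /\
  (perplexity n P <= 20%:R -> avg_KV_entropy n P F <= log2 20%:R).
Proof.
have p_ge0 (t : n.-tuple V) : 0 <= seq_prob P t.
  by apply: prodr_ge0 => i _; apply: HP0.
have p_sum1 : \sum_(t : n.-tuple V) seq_prob P t = 1.
  exact: (sum_prod_next_token_prob HP1 n [::]).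
have avgE : avg_KV_entropy n P F = log2_perplexity n P.
  rewrite /avg_KV_entropy (sum_cond_entropy_KV Hkey Hdistinct p_ge0 p_sum1).
  by rewrite entropy_id.
rewrite avgE; split=> [|PP_le20]; first exact: lexx.
by apply: le_log2_powR PP_le20; rewrite ltr0n.
Qed.
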